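(* Let $M$ be an $L$-structure, $G$ a group definable in $M$, and assume every complete type in $S_{G}(M)$ is definable. Then $G$ is definably extremely amenable if and only if for every definable left generic subset $Y$ of $G$ we have $YY^{-1}=G$.
   Context: $S_{G}(M)$ is the Stone space of complete types over $M$ containing the formula defining $G$. A type $p\in S(M)$ is definable if for every $L$-formula $\varphi(x,y)$, $\{b\in M:\varphi(x,b)\in p\}$ is definable in $M$. ''Definable'' means definable in $M$ with parameters from $M$. For a compact Hausdorff space $C$, a map $f\colon G\to C$ is definable if for any disjoint closed $C_{1},C_{2}\subseteq C$ there is a definable $Y'\subseteq G$ with $f^{-1}(C_{1})\subseteq Y'$ and $Y'\cap f^{-1}(C_{2})=\emptyset$. A definable $G$-flow is a compact Hausdorff space $X$ with an action of $G$ by homeomorphisms such that for each $x\in X$ the map $g\mapsto g\cdot x$ from $G$ to $X$ is definable. $G$ is definably extremely amenable if every definable $G$-flow $X$ has a point fixed by all of $G$. A definable subset $Y\subseteq G$ is left generic if finitely many left translates $g_{1}Y,\dots,g_{k}Y$ ($g_{i}\in G$) cover $G$. *)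

From mathcomp Require Import all_boot.
From mathcomp Require Import boolp classical_sets topology.

Set Implicit Arguments.
Unset Strict Implicit.
Unset Printing Implicit Defensive.

Local Open Scope classical_set_scope.

Record language := Language {
  func : Type;
  rel : Type;
  farity : func -> nat;
  rarity : rel -> nat }.

Record structure (L : language) := Structure {
  carrier :> Type;
  ifunc : forall f : func L, ('I_(farity f) -> carrier) -> carrier;
  irel : forall r : rel L, ('I_(rarity r) -> carrier) -> Prop }.

Section Syntax.
Variables (L : language) (M : structure L).

(* Terms and formulas of L_M: variables indexed by nat, parameters from M. *)
Inductive term : Type :=
| tvar : nat -> term
| tpar : M -> term
| tapp : forall f : func L, ('I_(farity f) -> term) -> term.

Inductive formula : Type :=
| feq : term -> term -> formula
| frel : forall r : rel L, ('I_(rarity r) -> term) -> formula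
| fneg : formula -> formula
| fand : formula -> formula -> formula
| fex : nat -> formula -> formula.

Arguments tapp : clear implicits.
Arguments frel : clear implicits.

Definition upd (v : nat -> M) (n : nat) (a : M) : nat -> M :=
  fun m => if m == n then a else v m.

Fixpoint teval (v : nat -> M) (t : term) : M :=
  match t with
  | tvar n => v n
  | tpar a => a
  | tapp f ts => @ifunc L M f (fun i => teval v (ts i))
  end.

Fixpoint sat (v : nat -> M) (phi : formula) : Prop :=
  match phi with
  | feq t1 t2 => teval v t1 = teval v t2
  | frel r ts => @irel L M r (fun i => teval v (ts i))
  | fneg psi => ~ sat v psi
  | fand psi chi => sat v psi /\ sat v chi
  | fex n psi => exists a : M, sat (upd v n a) psi
  end.

Fixpoint tfree (n : nat) (t : term) : Prop :=
  match t with
  | tvar m => m = n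
  | tpar _ => False
  | tapp f ts => exists i, tfree n (ts i)
  end.

Fixpoint ffree (n : nat) (phi : formula) : Prop :=
  match phi with
  | feq t1 t2 => tfree n t1 \/ tfree n t2
  | frel r ts => exists i, tfree n (ts i)
  | fneg psi => ffree n psi
  | fand psi chi => ffree n psi \/ ffree n chi
  | fex m psi => m <> n /\ ffree n psi
  end.

(* parameter-free terms / formulas (i.e. genuine L-formulas) *)
Fixpoint tparfree (t : term) : Prop :=
  match t with
  | tvar _ => True
  | tpar _ => False
  | tapp f ts => forall i, tparfree (ts i)
  end.

Fixpoint fparfree (phi : formula) : Prop :=
  match phi with
  | feq t1 t2 => tparfree t1 /\ tparfree t2
  | frel r ts => forall i, tparfree (ts i)
  | fneg psi => fparfree psi
  | fand psi chi => fparfree psi /\ fparfree chi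
  | fex _ psi => fparfree psi
  end.

Fixpoint tsubst (s : nat -> option M) (t : term) : term :=
  match t with
  | tvar n => match s n with Some a => tpar a | None => tvar n end
  | tpar a => tpar a
  | tapp f ts => tapp f (fun i => tsubst s (ts i))
  end.

Fixpoint fsubst (s : nat -> option M) (phi : formula) : formula :=
  match phi with
  | feq t1 t2 => feq (tsubst s t1) (tsubst s t2)
  | frel r ts => frel r (fun i => tsubst s (ts i))
  | fneg psi => fneg (fsubst s psi)
  | fand psi chi => fand (fsubst s psi) (fsubst s chi)
  | fex n psi => fex n (fsubst (fun m => if m == n then None else s m) psi)
  end.

Definition formula_in (k : nat) (phi : formula) : Prop :=
  forall n, ffree n phi -> n < k.

Definition prefix (k : nat) (v : nat -> M) : 'I_k -> M := fun i => v i.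

Definition blk (k j : nat) (v : nat -> M) : 'I_k -> M := fun i => v (j * k + i).

Arguments prefix : clear implicits.
Arguments blk : clear implicits.

Definition def_rel (P : (nat -> M) -> Prop) : Prop :=
  exists phi : formula, forall v, P v <-> sat v phi.

Definition defset (k : nat) (S : set ('I_k -> M)) : Prop :=
  def_rel (fun v => S (prefix k v)).

Definition definable_group (k : nat) (G : set ('I_k -> M))
  (mul : ('I_k -> M) -> ('I_k -> M) -> ('I_k -> M))
  (one : 'I_k -> M) (inv : ('I_k -> M) -> ('I_k -> M)) : Prop :=
  [/\ defset G,
      def_rel (fun v => [/\ G (blk k 0 v), G (blk k 1 v) &
                            blk k 2 v = mul (blk k 0 v) (blk k 1 v)]),
      G one /\ (forall g h, G g -> G h -> G (mul g h)) /\
        (forall g, G g -> G (inv g)),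
      (forall g h l, G g -> G h -> G l -> mul (mul g h) l = mul g (mul h l)) &
      (forall g, G g -> [/\ mul one g = g, mul g one = g,
                            mul (inv g) g = one & mul g (inv g) = one])].

Definition complete_type (k : nat) (p : set formula) : Prop :=
  [/\ forall phi, p phi -> formula_in k phi,
      (* consistent with the elementary diagram of M = finitely satisfiable in M *)
      forall (n : nat) (f : 'I_n -> formula), (forall i, p (f i)) ->
        exists v : nat -> M, forall i, sat v (f i) &
      forall phi, formula_in k phi -> p phi \/ p (fneg phi)].

Definition in_SG (k : nat) (G : set ('I_k -> M)) (p : set formula) : Prop :=
  complete_type k p /\
  exists phi, p phi /\ forall v, G (prefix k v) <-> sat v phi.

(* phi(x, b): substitute b_j for the variable x_(k+j) *)
Definition inst (k m : nat) (b : 'I_m -> M) : nat -> option M :=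
  fun n => if k <= n then omap b (insub (n - k)) else None.

Definition definable_type (k : nat) (p : set formula) : Prop :=
  forall (m : nat) (phi : formula), fparfree phi -> formula_in (k + m) phi ->
    defset [set b : 'I_m -> M | p (fsubst (inst k b) phi)].

Definition definable_map (k : nat) (G : set ('I_k -> M)) (C : topologicalType)
  (f : ('I_k -> M) -> C) : Prop :=
  forall C1 C2 : set C, closed C1 -> closed C2 -> C1 `&` C2 = set0 ->
    exists Y' : set ('I_k -> M),
      [/\ defset Y', Y' `<=` G,
          (forall g, G g -> C1 (f g) -> Y' g) &
          (forall g, G g -> Y' g -> ~ C2 (f g))].

Definition definable_flow (k : nat) (G : set ('I_k -> M))
  (mul : ('I_k -> M) -> ('I_k -> M) -> ('I_k -> M)) (one : 'I_k -> M)
  (X : topologicalType) (act : ('I_k -> M) -> X -> X) : Prop :=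
  [/\ compact [set: X], hausdorff_space X,
      (forall g, G g -> continuous (act g)),
      (forall x, act one x = x) /\
        (forall g h x, G g -> G h -> act (mul g h) x = act g (act h x)) &
      forall x, definable_map G (fun g => act g x)].

Definition definably_extremely_amenable (k : nat) (G : set ('I_k -> M))
  (mul : ('I_k -> M) -> ('I_k -> M) -> ('I_k -> M)) (one : 'I_k -> M) : Prop :=
  forall (X : topologicalType) (act : ('I_k -> M) -> X -> X),
    (exists x : X, True) -> definable_flow G mul one act ->
    exists x : X, forall g, G g -> act g x = x.

Definition left_generic (k : nat) (G : set ('I_k -> M))
  (mul : ('I_k -> M) -> ('I_k -> M) -> ('I_k -> M)) (Y : set ('I_k -> M)) : Prop :=
  exists (n : nat) (gs : 'I_n -> ('I_k -> M)),
    (forall i, G (gs i)) /\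
    forall g, G g -> exists i y, Y y /\ g = mul (gs i) y.

End Syntax.

(* If G is definably extremely amenable and Y is a definable left generic set,
   consider the closure of the right translates of the indicator function of Y
   in 2^G.  It is a compact G-flow, and since every type over M is definable,
   its orbit maps are definable.  A fixed point z is constant on G: if z = 1,
   every g in G is (g h) h^-1 with g h and h in Y; if z = 0, no finitely many
   left translates of Y cover G.
   Conversely, let a0 be an almost periodic point of a definable G-flow and
   suppose g a0 <> a0.  Separate a0 from g a0 by open sets O1, O2, and choose
   a neighbourhood V of a0 whose closure lies in U = O1 /\ g^-1 O2.  The
   definability of the orbit map of a0 gives a definable A between the return
   times of a0 to V and to U, which is left generic as a0 is almost periodic.
   Writing g^-1 = a b^-1 with a, b in A puts b a0 in both O1 and O2. *)

From HB Require Import structures.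
From Pilot Require Import Defs.
From mathcomp Require Import all_boot.
From mathcomp Require Import boolp classical_sets topology.
From mathcomp Require Import finmap zify.

Set Implicit Arguments.
Unset Strict Implicit.
Unset Printing Implicit Defensive.
Local Open Scope classical_set_scope.

Local Notation prefix k v := (@Defs.prefix _ _ k v).
Local Notation blk k j v := (@Defs.blk _ _ k j v).

(** * Renaming variables, substituting and abstracting parameters *)

Section Syntax.
Variables (L : language) (M : structure L).
Local Notation term := (term M).
Local Notation formula := (formula M).

Fixpoint tbound (t : term) : nat :=
  match t with
  | tvar n => n.+1
  | tpar _ => 0
  | tapp f ts => \max_(i < farity f) tbound (ts i)
  end.

Fixpoint fbound (phi : formula) : nat :=
  match phi with
  | feq t1 t2 => maxn (tbound t1) (tbound t2)
  | Defs.frel r ts => \max_(i < rarity r) tbound (ts i)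
  | fneg psi => fbound psi
  | fand psi chi => maxn (fbound psi) (fbound chi)
  | fex n psi => maxn n.+1 (fbound psi)
  end.

Lemma tfree_bound n (t : term) : tfree n t -> n < tbound t.
Proof.
elim: t => [m|//|f ts IH] /=; first by move=> ->.
by move=> [i /IH Hi]; apply: leq_trans Hi _; apply: (leq_bigmax i).
Qed.

Lemma ffree_bound n (phi : formula) : ffree n phi -> n < fbound phi.
Proof.
elim: phi => [t1 t2|r ts|psi IH|psi IH chi IH'|m psi IH] /=.
- by case=> /tfree_bound H; rewrite leq_max H ?orbT.
- by move=> [i /tfree_bound Hi]; apply: leq_trans Hi _; apply: (leq_bigmax i).
- exact: IH.
- by case=> [/IH|/IH'] H; rewrite leq_max H ?orbT.
- by move=> [_ /IH H]; rewrite leq_max H orbT.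
Qed.

Lemma eq_teval (t : term) (v w : nat -> M) :
  (forall n, tfree n t -> v n = w n) -> teval v t = teval w t.
Proof.
elim: t => [n|//|f ts IH] /= H; first exact: H.
by congr ifunc; apply: funext => i; apply: IH => n Hn; apply: H; exists i.
Qed.

Lemma eq_sat (phi : formula) (v w : nat -> M) :
  (forall n, ffree n phi -> v n = w n) -> (sat v phi <-> sat w phi).
Proof.
elim: phi v w => [t1 t2|r ts|psi IH|psi IH chi IH'|n psi IH] v w /= H.
- by rewrite (@eq_teval t1 v w) ?(@eq_teval t2 v w) // => m Hm; apply: H; auto.
- suff -> : (fun i => teval v (ts i)) = (fun i => teval w (ts i)) by [].
  by apply: funext => i; apply: eq_teval => m Hm; apply: H; exists i.
- by rewrite (IH v w).
- by rewrite (IH v w) ?(IH' v w) // => m Hm; apply: H; auto.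
- have eq_upd a : sat (upd v n a) psi <-> sat (upd w n a) psi.
    apply: IH => m Hm; rewrite /upd; case: eqP => // ne.
    by apply: H; split => // E; apply: ne.
  by split=> -[a Ha]; exists a; apply/eq_upd.
Qed.

Definition override (S N : nat) (f v : nat -> M) : nat -> M :=
  fun j => if (S <= j) && (j < S + N) then f j else v j.

Fixpoint fexn (S N : nat) (phi : formula) : formula :=
  match N with 0 => phi | N'.+1 => fex S (fexn S.+1 N' phi) end.

Lemma sat_fexn N S (phi : formula) v :
  sat v (fexn S N phi) <-> exists f : nat -> M, sat (override S N f v) phi.
Proof.
elim: N S v => [|N IH] S v /=.
  have E f : override S 0 f v = v.
    by apply: funext => j; rewrite /override addn0; case: ifP => //; lia.
  by split => [H|[f]]; [exists v|]; rewrite E.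
have E a f : override S.+1 N f (upd v S a) =
             override S N.+1 (fun j => if j == S then a else f j) v.
  apply: funext => j; rewrite /override /upd.
  case: (ltngtP j S) => [jS|Sj|->] //=; first by rewrite addSnnS.
  by rewrite ifT //; lia.
split.
  by move=> [a /IH [f]]; rewrite E => Hf; eexists; exact: Hf.
move=> [f Hf]; exists (f S); apply/IH; exists f; rewrite E.
suff -> : (fun j => if j == S then f S else f j) = f by [].
by apply: funext => j; case: eqP => [->|].
Qed.

(* Renamings send each variable to a variable ([inl]) or a parameter ([inr]). *)
Definition sum_term (x : nat + M) : term :=
  match x with inl n => tvar M n | inr a => tpar a end.

Definition sum_eval (v : nat -> M) (x : nat + M) : M :=
  match x with inl n => v n | inr a => a end.

Definition sbound (sig : nat -> nat + M) (N : nat) : nat :=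
  \max_(i < N) (match sig i with inl n => n.+1 | inr _ => 0 end).

Lemma sbound_lt sig N i n : i < N -> sig i = inl n -> n < sbound sig N.
Proof.
move=> iN e; have := @leq_bigmax _
  (fun i : 'I_N => match sig i with inl n => n.+1 | inr _ => 0 end) (Ordinal iN).
by rewrite /= e.
Qed.

Fixpoint tren (sig : nat -> nat + M) (t : term) : term :=
  match t with
  | tvar n => sum_term (sig n)
  | tpar a => tpar a
  | tapp f ts => tapp (fun i => tren sig (ts i))
  end.

(* The bound variable is renamed above every variable that [sig] sends the
   variables of [psi] to; this avoids capture. *)
Fixpoint fren (sig : nat -> nat + M) (phi : formula) : formula :=
  match phi with
  | feq t1 t2 => feq (tren sig t1) (tren sig t2)
  | Defs.frel r ts => @Defs.frel _ _ r (fun i => tren sig (ts i))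
  | fneg psi => fneg (fren sig psi)
  | fand psi chi => fand (fren sig psi) (fren sig chi)
  | fex n psi => let F := sbound sig (fbound psi) in
                 fex F (fren (fun j => if j == n then inl F else sig j) psi)
  end.

Lemma teval_tren sig v (t : term) :
  teval v (tren sig t) = teval (fun j => sum_eval v (sig j)) t.
Proof.
elim: t => [n|//|f ts IH] /=; first by case: (sig n).
by congr ifunc; apply: funext => i; exact: IH.
Qed.

Lemma sat_fren sig (phi : formula) v :
  sat v (fren sig phi) <-> sat (fun j => sum_eval v (sig j)) phi.
Proof.
elim: phi sig v => [t1 t2|r ts|psi IH|psi IH chi IH'|n psi IH] sig v /=.
- by rewrite !teval_tren.
- suff -> : (fun i => teval v (tren sig (ts i))) =
            (fun i => teval (fun j => sum_eval v (sig j)) (ts i)) by [].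
  by apply: funext => i; rewrite teval_tren.
- by rewrite IH.
- by rewrite IH IH'.
- set F := sbound sig (fbound psi).
  have E a : sat (upd v F a) (fren (fun j => if j == n then inl F else sig j) psi)
         <-> sat (upd (fun j => sum_eval v (sig j)) n a) psi.
    rewrite IH; apply: eq_sat => j /ffree_bound jb; rewrite /upd.
    case: eqP => [_|_] /=; first by rewrite eqxx.
    case E : (sig j) => [m|//] /=.
    by have := sbound_lt jb E; rewrite -/F; case: eqP => //; lia.
  by split=> -[a Ha]; exists a; apply/E.
Qed.

Lemma tfree_tren sig n (t : term) :
  tfree n (tren sig t) -> exists2 i, tfree i t & sig i = inl n.
Proof.
elim: t => [m|//|f ts IH] /=.
  by case E : (sig m) => [j|//] /= <-; exists m.
by move=> [i /IH [j Hj E]]; exists j => //; exists i.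
Qed.

Lemma ffree_fren sig (phi : formula) n :
  ffree n (fren sig phi) -> exists2 i, ffree i phi & sig i = inl n.
Proof.
elim: phi sig => [t1 t2|r ts|psi IH|psi IH chi IH'|m psi IH] sig /=.
- by case=> /tfree_tren [i Hi E]; exists i; auto.
- by move=> [j /tfree_tren [i Hi E]]; exists i => //; exists j.
- exact: IH.
- by case=> [/IH [i Hi E]|/IH' [i Hi E]]; exists i; auto.
- move=> [nF /IH [i Hi]]; case: eqP => [_ [Fn]|im E]; first by case: nF.
  by exists i => //; split => // mi; apply: im.
Qed.

Lemma tparfree_tren sig (t : term) :
  (forall i, exists n, sig i = inl n) -> tparfree t -> tparfree (tren sig t).
Proof.
move=> Hs; elim: t => [n|//|f ts IH] /=; last by move=> H i; apply: IH.
by have [m ->] := Hs n.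
Qed.

Lemma fparfree_fren sig (phi : formula) :
  (forall i, exists n, sig i = inl n) -> fparfree phi -> fparfree (fren sig phi).
Proof.
elim: phi sig => [t1 t2|r ts|psi IH|psi IH chi IH'|m psi IH] sig Hs /=.
- by move=> [? ?]; split; apply: tparfree_tren.
- by move=> H i; apply: tparfree_tren.
- exact: IH.
- by move=> [? ?]; split; [apply: IH|apply: IH'].
- apply: IH => i; case: eqP => _; [eexists; reflexivity|exact: Hs].
Qed.

Lemma teval_tsubst s v (t : term) :
  teval v (tsubst s t) = teval (fun n => odflt (v n) (s n)) t.
Proof.
elim: t => [n|a|f ts IH] //=; first by case: (s n).
by congr ifunc; apply: funext => i; exact: IH.
Qed.

Lemma sat_fsubst s (phi : formula) v :
  sat v (fsubst s phi) <-> sat (fun n => odflt (v n) (s n)) phi.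
Proof.
elim: phi s v => [t1 t2|r ts|psi IH|psi IH chi IH'|n psi IH] s v /=.
- by rewrite !teval_tsubst.
- suff -> : (fun i => teval v (tsubst s (ts i))) =
            (fun i => teval (fun n => odflt (v n) (s n)) (ts i)) by [].
  by apply: funext => i; rewrite teval_tsubst.
- by rewrite IH.
- by rewrite IH IH'.
- have E a : (fun m => odflt (upd v n a m) (if m == n then None else s m)) =
             upd (fun n => odflt (v n) (s n)) n a.
    by apply: funext => m; rewrite /upd; case: eqP.
  by split=> -[a Ha]; exists a; move: Ha; rewrite IH E.
Qed.

Lemma tfree_tsubst s n (t : term) : tfree n (tsubst s t) -> tfree n t /\ s n = None.
Proof.
elim: t => [m|//|f ts IH] /=; first by case E : (s m) => [a|] //= <-.
by move=> [i /IH [H1 H2]]; split => //; exists i.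
Qed.

Lemma ffree_fsubst s n (phi : formula) :
  ffree n (fsubst s phi) -> ffree n phi /\ s n = None.
Proof.
elim: phi s => [t1 t2|r ts|psi IH|psi IH chi IH'|m psi IH] s /=.
- by case=> /tfree_tsubst [? ?]; split => //; [left|right].
- by move=> [i /tfree_tsubst [? ?]]; split => //; exists i.
- exact: IH.
- by case=> [/IH [? ?]|/IH' [? ?]]; split => //; [left|right].
- by move=> [ne /IH [H1]]; case: eqP => [/esym //|_ H2].
Qed.

Fixpoint tpars (t : term) : seq {classic M} :=
  match t with
  | tvar _ => [::]
  | tpar a => [:: (a : {classic M})]
  | tapp f ts => flatten [seq tpars (ts i) | i <- enum 'I_(farity f)]
  end.

Fixpoint fpars (phi : formula) : seq {classic M} :=
  match phi with
  | feq t1 t2 => tpars t1 ++ tpars t2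
  | Defs.frel r ts => flatten [seq tpars (ts i) | i <- enum 'I_(rarity r)]
  | fneg psi => fpars psi
  | fand psi chi => fpars psi ++ fpars chi
  | fex _ psi => fpars psi
  end.

Fixpoint tabs (S : nat) (s : seq {classic M}) (t : term) : term :=
  match t with
  | tvar n => tvar M n
  | tpar a => tvar M (S + index (a : {classic M}) s)
  | tapp f ts => tapp (fun i => tabs S s (ts i))
  end.

Fixpoint fabs (S : nat) (s : seq {classic M}) (phi : formula) : formula :=
  match phi with
  | feq t1 t2 => feq (tabs S s t1) (tabs S s t2)
  | Defs.frel r ts => @Defs.frel _ _ r (fun i => tabs S s (ts i))
  | fneg psi => fneg (fabs S s psi)
  | fand psi chi => fand (fabs S s psi) (fabs S s chi)
  | fex n psi => fex n (fabs S s psi)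
  end.

Lemma tpars_flatten n (ts : 'I_n -> term) i :
  {subset tpars (ts i) <= flatten [seq tpars (ts i) | i <- enum 'I_n]}.
Proof. by move=> a ai; apply/flatten_mapP; exists i => //; rewrite mem_enum. Qed.

Lemma teval_tabs S s (t : term) v w : tbound t <= S -> {subset tpars t <= s} ->
  (forall n, n < S -> w n = v n) -> (forall a, a \in s -> w (S + index a s) = a) ->
  teval w (tabs S s t) = teval v t.
Proof.
elim: t => [n|a|f ts IH] /= Hb Hs H1 H2.
- exact: H1.
- by apply: H2; apply: Hs; rewrite mem_seq1.
- congr ifunc; apply: funext => i; apply: IH => //.
    by apply: leq_trans Hb; apply: (leq_bigmax i).
  by move=> a /tpars_flatten /Hs.
Qed.

Lemma sat_fabs S s (phi : formula) v w : fbound phi <= S -> {subset fpars phi <= s} ->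
  (forall n, n < S -> w n = v n) -> (forall a, a \in s -> w (S + index a s) = a) ->
  (sat w (fabs S s phi) <-> sat v phi).
Proof.
elim: phi v w => [t1 t2|r ts|psi IH|psi IH chi IH'|n psi IH] v w /=;
  rewrite ?geq_max => Hb Hs H1 H2.
- case/andP: Hb => Hb1 Hb2.
  by rewrite !(@teval_tabs _ _ _ v) // => a ai; apply: Hs; rewrite mem_cat ai ?orbT.
- suff -> : (fun i => teval w (tabs S s (ts i))) = (fun i => teval v (ts i)) by [].
  apply: funext => i; apply: teval_tabs => //.
    by apply: leq_trans Hb; apply: (leq_bigmax i).
  by move=> a /tpars_flatten /Hs.
- by rewrite (IH v w).
- case/andP: Hb => Hb1 Hb2.
  by rewrite (IH v w) ?(IH' v w) // => a ai; apply: Hs; rewrite mem_cat ai ?orbT.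
- case/andP: Hb => nS Hb.
  have E a : sat (upd w n a) (fabs S s psi) <-> sat (upd v n a) psi.
    apply: IH => //.
    + by move=> m Hm; rewrite /upd; case: eqP => // _; apply: H1.
    + move=> b bs; rewrite /upd; case: eqP => [E|_]; last exact: H2.
      by move: nS; rewrite -E; lia.
  by split=> -[a Ha]; exists a; apply/E.
Qed.

Lemma tfree_tabs S s (t : term) n : {subset tpars t <= s} ->
  tfree n (tabs S s t) -> tfree n t \/ S <= n < S + size s.
Proof.
elim: t => [m|a|f ts IH] /= Hs; first by left.
  by move=> <-; right; rewrite leq_addr ltn_add2l index_mem Hs ?mem_seq1.
move=> [i Hi]; have [H|H] := IH i (fun a ai => Hs a (tpars_flatten ai)) Hi.
  by left; exists i.
by right.
Qed.

Lemma ffree_fabs S s (phi : formula) n : {subset fpars phi <= s} ->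
  ffree n (fabs S s phi) -> ffree n phi \/ S <= n < S + size s.
Proof.
elim: phi => [t1 t2|r ts|psi IH|psi IH chi IH'|m psi IH] /= Hs.
- have s1 : {subset tpars t1 <= s} by move=> a ai; rewrite Hs // mem_cat ai.
  have s2 : {subset tpars t2 <= s} by move=> a ai; rewrite Hs // mem_cat ai orbT.
  by case=> [/(tfree_tabs s1)|/(tfree_tabs s2)] []; auto.
- move=> [i Hi]; have [H|H] := tfree_tabs (fun a ai => Hs a (tpars_flatten ai)) Hi.
    by left; exists i.
  by right.
- exact: IH.
- have s1 : {subset fpars psi <= s} by move=> a ai; rewrite Hs // mem_cat ai.
  have s2 : {subset fpars chi <= s} by move=> a ai; rewrite Hs // mem_cat ai orbT.
  by case=> [/(IH s1)|/(IH' s2)] []; auto.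
- by move=> [mn /(IH Hs) []]; auto.
Qed.

Lemma tparfree_tabs S s (t : term) : tparfree (tabs S s t).
Proof. by elim: t => //= f ts IH i. Qed.

Lemma fparfree_fabs S s (phi : formula) : fparfree (fabs S s phi).
Proof.
elim: phi => [t1 t2|r ts|//|psi IH chi IH'|//] /=; last by split.
  by split; apply: tparfree_tabs.
by move=> i; apply: tparfree_tabs.
Qed.

End Syntax.

(** * Definable relations *)

Section Environments.
Variables (L : language) (M : structure L).

Definition seg (n m : nat) (v : nat -> M) : 'I_m -> M := fun i => v (n + i).
Arguments seg : clear implicits.

(* [v] with the block of length [m] starting at [n] replaced by [u]; this is the
   environment in which [fsubst (inst n u)] is evaluated. *)
Definition place (n m : nat) (u : 'I_m -> M) (v : nat -> M) : nat -> M :=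
  fun j => odflt (v j) (inst n u j).

Definition catf (m m' : nat) (b : 'I_m -> M) (c : 'I_m' -> M) : 'I_(m + m') -> M :=
  fun i => match split i with inl j => b j | inr j => c j end.

Variant place_spec (n m j : nat) : Prop :=
  | PlaceOut of (j < n) || (n + m <= j)
  | PlaceIn (i : 'I_m) of j = n + i.

Lemma placeP n m j : place_spec n m j.
Proof.
have [jn|nj] := ltnP j n; first by apply: PlaceOut; rewrite jn.
have [jm|mj] := ltnP (j - n) m; last by apply: PlaceOut; lia.
by apply: (@PlaceIn _ _ _ (Ordinal jm)); rewrite subnKC.
Qed.

Lemma place_in n m (u : 'I_m -> M) v (i : 'I_m) : place n u v (n + i) = u i.
Proof. by rewrite /place /inst leq_addr addKn valK. Qed.

Lemma place_out n m (u : 'I_m -> M) v j :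
  (j < n) || (n + m <= j) -> place n u v j = v j.
Proof.
rewrite /place /inst; case: ifP => //= nj jout.
by rewrite insubF //; lia.
Qed.

Lemma prefix_seg k (v : nat -> M) : prefix k v = seg 0 k v.
Proof. by []. Qed.

Lemma seg_place n m (u : 'I_m -> M) v : seg n m (place n u v) = u.
Proof. by apply: funext => i; rewrite /seg place_in. Qed.

Lemma place_seg n m (v : nat -> M) : place n (seg n m v) v = v.
Proof.
by apply: funext => j; case: (placeP n m j) => [/place_out ->|i ->]; rewrite ?place_in.
Qed.

Lemma place_catf n m m' (b : 'I_m -> M) (c : 'I_m' -> M) v :
  place n (catf b c) v = place (n + m) c (place n b v).
Proof.
apply: funext => j; case: (placeP n (m + m') j) => [out|i ->].
  by rewrite !place_out //; lia.
rewrite place_in /catf; case: splitP => [i' ->|i' ->].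
  by rewrite place_out ?place_in // ltn_add2l ltn_ord.
by rewrite addnA place_in.
Qed.

End Environments.
Arguments seg {L M}.

Section DefinableRelations.
Variables (L : language) (M : structure L).
Local Notation formula := (formula M).
Implicit Types (P Q : (nat -> M) -> Prop).

Lemma def_rel_ext P Q : (forall v, P v <-> Q v) -> def_rel P -> def_rel Q.
Proof. by move=> PQ [phi Hp]; exists phi => v; rewrite -PQ. Qed.

Lemma def_relI P Q : def_rel P -> def_rel Q -> def_rel (fun v => P v /\ Q v).
Proof. by move=> [phi Hp] [psi Hq]; exists (fand phi psi) => v /=; rewrite Hp Hq. Qed.

Lemma def_relC P : def_rel P -> def_rel (fun v => ~ P v).
Proof. by move=> [phi Hp]; exists (fneg phi) => v /=; rewrite Hp. Qed.

Lemma def_relU P Q : def_rel P -> def_rel Q -> def_rel (fun v => P v \/ Q v).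
Proof.
move=> dP dQ; apply: def_rel_ext (def_relC (def_relI (def_relC dP) (def_relC dQ))) => v.
by split=> [/not_andP [] /contrapT|[] ? []]; auto.
Qed.

Lemma def_relT : def_rel (fun _ : nat -> M => True).
Proof. by exists (feq (tvar M 0) (tvar M 0)). Qed.

Lemma def_rel0 : def_rel (fun _ : nat -> M => False).
Proof. by apply: def_rel_ext (def_relC def_relT) => v; split => // /(_ I). Qed.

Lemma def_rel_ren (sig : nat -> nat + M) P :
  def_rel P -> def_rel (fun v => P (fun j => sum_eval v (sig j))).
Proof. by move=> [phi Hp]; exists (fren sig phi) => v; rewrite sat_fren Hp. Qed.

Lemma def_rel_place n m (u : 'I_m -> M) P :
  def_rel P -> def_rel (fun v => P (place n u v)).
Proof. by move=> [phi Hp]; exists (fsubst (inst n u) phi) => v; rewrite sat_fsubst Hp. Qed.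

Lemma def_rel_exists n m P :
  def_rel P -> def_rel (fun v => exists u : 'I_m -> M, P (place n u v)).
Proof.
move=> [phi Hp]; exists (fexn n m phi) => v; rewrite sat_fexn.
have E f : override n m f v = place n (seg n m f) v.
  apply: funext => j; rewrite /override.
  case: (placeP n m j) => [out|i ->]; last by rewrite place_in leq_addr ltn_add2l ltn_ord.
  by rewrite place_out // ifF //; lia.
split=> [[u Hu]|[f]]; last by rewrite -Hp E; exists (seg n m f).
by exists (place n u v); rewrite E seg_place -Hp.
Qed.

Lemma def_rel_all (A : Type) (s : seq A) (P : A -> (nat -> M) -> Prop) :
  (forall a, def_rel (P a)) -> def_rel (fun v => forall a, List.In a s -> P a v).
Proof.
move=> dP; elim: s => [|a s IH] /=; first by apply: def_rel_ext def_relT.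
apply: def_rel_ext (def_relI (dP a) IH) => v.
by split=> [[Ha Hs] b [<-|/Hs]|H] //; split=> [|b bs]; apply: H; auto.
Qed.

Lemma def_rel_has (A : Type) (s : seq A) (P : A -> (nat -> M) -> Prop) :
  (forall a, def_rel (P a)) -> def_rel (fun v => exists2 a, List.In a s & P a v).
Proof.
move=> dP; elim: s => [|a s IH] /=; first by apply: def_rel_ext def_rel0 => v; split => // -[].
apply: def_rel_ext (def_relU (dP a) IH) => v.
split=> [[Ha|[b bs Hb]]|[b [<-|bs] Hb]]; by [left|right; exists b|exists a; auto|exists b; auto].
Qed.

Definition depends_below (T : nat) P :=
  forall v w, (forall n, n < T -> v n = w n) -> P v -> P w.

Lemma def_rel_formula_in (m0 : M) T P : def_rel P -> depends_below T P ->
  exists phi, formula_in T phi /\ forall v, P v <-> sat v phi.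
Proof.
move=> [phi Hp] dep; pose s n := if T <= n then Some m0 else None.
exists (fsubst s phi); split.
  by move=> n /ffree_fsubst [_]; rewrite /s; case: leqP.
move=> v; rewrite sat_fsubst -Hp.
by split; apply: dep => n nT; rewrite /s leqNgt nT.
Qed.

Lemma def_rel_parfree (m0 : M) T P : def_rel P -> depends_below T P ->
  exists (psi : formula) (m' : nat) (c : 'I_m' -> M),
    [/\ fparfree psi, formula_in (T + m') psi &
        forall v, P v <-> sat (place T c v) psi].
Proof.
move=> dP dep; have [phi [phiT Hp]] := def_rel_formula_in m0 dP dep.
pose s := fpars phi; pose S := maxn T (fbound phi).
pose sig j : nat + M := inl (if j < S then j else T + (j - S)).
exists (fren sig (fabs S s phi)), (size s), (fun i => nth m0 s i); split.
- by apply: fparfree_fren; [move=> i; eexists|apply: fparfree_fabs].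
- move=> n /ffree_fren [i /ffree_fabs [//|/phiT iT|iS] [<-]].
    by rewrite ifT /S; lia.
  by case/andP: iS => Si iS; rewrite (ltnNge i) Si /= ltn_add2l ltn_subLR.
move=> v; set c := fun i : 'I_(size s) => nth m0 s i.
set w := fun j => sum_eval (place T c v) (sig j).
rewrite sat_fren (@sat_fabs _ _ S s phi w w) ?leq_maxr //; last first.
  move=> a ai; rewrite /w /sig /= ifF; last by lia.
  have ia : index a s < size s by rewrite index_mem.
  by rewrite addKn (place_in T c v (Ordinal ia)) /c /= (nth_index (m0 : {classic M}) ai).
rewrite Hp; apply: eq_sat => n /phiT nT.
by rewrite /w /sig /= ifT ?place_out ?nT // /S; lia.
Qed.

End DefinableRelations.
Arguments def_rel0 {L M}.

(** * Types given by ultrafilters *)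

Section UltrafilterTypes.
Variables (L : language) (M : structure L) (k : nat) (U : set_system (nat -> M)).
Hypothesis U_ultra : UltraFilter U.

Definition ultra_type : set (formula M) :=
  fun phi => formula_in k phi /\ U [set v | sat v phi].

Lemma ultra_type_complete : complete_type k ultra_type.
Proof.
split=> [phi []//|n f Hf|phi phik].
  have [v Hv] := filter_ex (@filter_forall _ _ _ U _ (fun i => proj2 (Hf i))).
  by exists v.
by case: (in_ultra_setVsetC [set v | sat v phi] U_ultra); [left|right].
Qed.

Lemma ultra_type_in_SG (G : set ('I_k -> M)) :
  defset G -> U [set v | G (prefix k v)] -> in_SG G ultra_type.
Proof.
move=> dG UG; have [v0 _] := filter_ex (@filterT _ U _).
have dep : depends_below k (fun v => G (prefix k v)).
  by move=> v w vw; congr G; apply: funext => i; apply: vw.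
have [phi [phik Hp]] := def_rel_formula_in (v0 0) dG dep.
split; first exact: ultra_type_complete.
by exists phi; split=> //; split=> //; apply: filterS UG => v /Hp.
Qed.

(* Definability of the type, extended from parameter-free formulas to all
   definable relations [Q x b]. *)
Lemma def_ultra_type_fiber m (Q : ('I_k -> M) -> ('I_m -> M) -> Prop) :
  definable_type k ultra_type -> def_rel (fun v => Q (prefix k v) (seg k m v)) ->
  defset [set b : 'I_m -> M | U [set v | Q (prefix k v) b]].
Proof.
move=> dtype dQ; have [v0 _] := filter_ex (@filterT _ U _).
have dep : depends_below (k + m) (fun v => Q (prefix k v) (seg k m v)).
  move=> v w vw; have -> : prefix k v = prefix k w.
    by apply: funext => i; apply: vw; apply: ltn_addr.
  suff -> : seg k m v = seg k m w by [].
  by apply: funext => i; apply: vw; rewrite ltn_add2l.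
have [psi [m' [c [pf fin Hpsi]]]] := def_rel_parfree (v0 0) dQ dep.
have fin' : formula_in (k + (m + m')) psi by rewrite addnA.
have dB := dtype (m + m') psi pf fin'.
have fiberE b w : sat w (fsubst (inst k (catf b c)) psi) <-> Q (prefix k w) b.
  rewrite sat_fsubst -[fun n => _]/(place k (catf b c) w) place_catf -Hpsi seg_place.
  suff -> : prefix k (place k b w) = prefix k w by [].
  by apply: funext => i; rewrite /Defs.prefix place_out // ltn_ord.
have typeE b : ultra_type (fsubst (inst k (catf b c)) psi) <->
               U [set v | Q (prefix k v) b].
  split=> [[_]|UQ]; first by apply: filterS => v /fiberE.
  split; last by apply: filterS UQ => v /fiberE.
  move=> n /ffree_fsubst [/fin nb]; rewrite /inst; case: leqP => // kn.
  by rewrite insubT //; lia.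
apply: def_rel_ext (def_rel_place m c dB) => v /=.
have := place_catf 0 (prefix m v) c v; rewrite place_seg => <-.
by rewrite prefix_seg seg_place typeE.
Qed.

End UltrafilterTypes.

(** * Subspaces of the Cantor cube *)

Lemma In_mem (T : eqType) (x : T) (s : seq T) : List.In x s <-> x \in s.
Proof.
elim: s => [|y s IH] //=; rewrite in_cons; split.
  by move=> [->|/IH ->]; rewrite ?eqxx ?orbT.
by move=> /orP [/eqP ->|/IH]; [left|right].
Qed.

(* [compact_cover] is stated for pointed spaces; a nonempty set provides a point. *)
Definition pointed_at (X : topologicalType) (x0 : X) : Type := X.
HB.instance Definition _ (X : topologicalType) (x0 : X) :=
  Topological.copy (pointed_at x0) X.
HB.instance Definition _ (X : topologicalType) (x0 : X) :=
  isPointed.Build (pointed_at x0) x0.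

Lemma compact_cover_compact (X : topologicalType) (A : set X) :
  compact A -> cover_compact A.
Proof.
move=> cA; have [[x0 _]|A0] := pselect (exists x, A x).
  by have : @compact (pointed_at x0) A by []; rewrite compact_cover.
by move=> I D f _ _; exists fset0 => // x Ax; case: A0; exists x.
Qed.

Lemma open_closure_subset (X : topologicalType) (x : X) (U : set X) :
  hausdorff_space X -> compact [set: X] -> open U -> U x ->
  exists2 V, open V /\ V x & closure V `<=` U.
Proof.
move=> hs cpt oU Ux.
have [W Wx WU] := compact_regular hs cpt filterT (open_nbhs_nbhs (conj oU Ux)).
move: Wx; rewrite nbhsE => -[V [oV Vx] VW].
by exists V => //; apply: subset_trans (closureS VW) WU.
Qed.

(* The subspace [{z | P z}] of the Cantor cube [T -> bool] with the product topology. *)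
Definition cube (T : Type) (P : (T -> bool) -> Prop) : Type := {z : T -> bool | P z}.
HB.instance Definition _ (T : Type) (P : (T -> bool) -> Prop) := gen_eqMixin (cube P).
HB.instance Definition _ (T : Type) (P : (T -> bool) -> Prop) :=
  gen_choiceMixin (cube P).

Section CubeTopology.
Variables (T : Type) (P : (T -> bool) -> Prop).

Definition coord (z : cube P) : T -> bool := proj1_sig z.

Definition cyl (z : cube P) (s : seq T) : set (cube P) :=
  [set w | forall h, List.In h s -> coord w h = coord z h].

Definition cyl_nbhs (z : cube P) : set_system (cube P) :=
  [set A | exists s, cyl z s `<=` A].

Lemma cyl_nbhs_filter z : ProperFilter (cyl_nbhs z).
Proof.
apply: Build_ProperFilter; first by move=> [s /(_ z (fun _ _ => erefl))].
split; first by exists [::].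
- move=> A B [s sA] [t tB]; exists (s ++ t) => w Hw.
  by split; [apply: sA|apply: tB] => h hs; apply: Hw; apply: List.in_or_app; auto.
- by move=> A B AB [s sA]; exists s; apply: subset_trans AB.
Qed.

Lemma cyl_nbhs_singleton z A : cyl_nbhs z A -> A z.
Proof. by move=> [s sA]; apply: sA. Qed.

Lemma cyl_nbhs_nbhs z A : cyl_nbhs z A -> cyl_nbhs z (cyl_nbhs^~ A).
Proof.
by move=> [s sA]; exists s => w Hw; exists s => u Hu; apply: sA => h hs; rewrite Hu ?Hw.
Qed.

End CubeTopology.

HB.instance Definition _ (T : Type) (P : (T -> bool) -> Prop) :=
  hasNbhs.Build (cube P) (@cyl_nbhs T P).
HB.instance Definition _ (T : Type) (P : (T -> bool) -> Prop) :=
  Nbhs_isNbhsTopological.Build (cube P) (@cyl_nbhs_filter T P)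
    (@cyl_nbhs_singleton T P) (@cyl_nbhs_nbhs T P).

Section CubeTheory.
Variables (T : Type) (P : (T -> bool) -> Prop).
Local Notation X := (cube P).

Lemma coord_inj (z w : X) : coord z = coord w -> z = w.
Proof.
case: z w => [z pz] [w pw] /= E; move: pz pw; rewrite E => pz pw.
by rewrite (Prop_irrelevance pz pw).
Qed.

Lemma cyl_open (z : X) s : open (cyl z s).
Proof. by rewrite openE => w Hw; exists s => u Hu h hs; rewrite Hu ?Hw. Qed.

Lemma cube_hausdorff : hausdorff_space X.
Proof.
move=> p q clpq; apply: coord_inj; apply: funext => h; apply: contrapT => ne.
have cyl_h (z : X) : nbhs z (cyl z [:: h]) by exists [:: h].
have [w [Hp Hq]] := clpq _ _ (cyl_h p) (cyl_h q).
by apply: ne; rewrite -(Hp h) ?(Hq h) //; left.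
Qed.

Lemma cube_compact :
  (forall z0 : T -> bool,
     (forall s, exists w : X, forall h, List.In h s -> coord w h = z0 h) -> P z0) ->
  compact [set: X].
Proof.
move=> Pcl F PF _; have [U [UU FU]] := ultraFilterLemma PF.
pose z0 h := `[< U [set w : X | coord w h] >].
have Ucoord h : U [set w : X | coord w h = z0 h].
  rewrite /z0; case: asboolP => Hh; first by apply: filterS Hh.
  have [//|H] := in_ultra_setVsetC [set w : X | coord w h] UU.
  by apply: filterS H => w /negP /negbTE.
have Ucyl s : U [set w : X | forall h, List.In h s -> coord w h = z0 h].
  elim: s => [|h s IH]; first by apply: filterS filterT => w _ h [].
  by apply: filterS (filterI (Ucoord h) IH) => w [H1 H2] h' /= [<-|/H2].
have Pz0 : P z0.
  by apply: Pcl => s; have [w Hw] := filter_ex (Ucyl s); exists w.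
exists (exist _ z0 Pz0); split => // A B FA [s sB].
have [w [Aw Hw]] := filter_ex (filterI (FU _ FA) (Ucyl s)).
by exists w; split => //; apply: sB.
Qed.

Lemma cube_continuous (F : X -> X) (r : T -> T) :
  (forall z h, coord (F z) h = coord z (r h)) -> continuous F.
Proof.
move=> HF z B /= [s sB]; exists (map r s) => w Hw; apply: sB => h hs.
by rewrite !HF; apply: Hw; apply: List.in_map.
Qed.

Lemma cube_separate (C1 C2 : set X) : compact [set: X] -> closed C1 -> closed C2 ->
  C1 `&` C2 = set0 ->
  exists l : seq (X * seq T),
    (forall z, C1 z -> exists2 p, List.In p l & cyl p.1 p.2 z) /\
    (forall p, List.In p l -> forall z, cyl p.1 p.2 z -> ~ C2 z).
Proof.
move=> cpt cl1 cl2 dis.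
have /choice [sf Hsf] : forall z, exists s, C1 z -> cyl z s `<=` ~` C2.
  move=> z; have [C1z|] := pselect (C1 z); last by exists [::].
  have : nbhs z (~` C2).
    rewrite -(openC C2) in cl2; apply: (cl2 z) => C2z.
    by have : (C1 `&` C2) z by []; rewrite dis.
  by move=> [s sC]; exists s.
have [D' sD' cov] : finite_subset_cover (C1 : set {classic X})
    (fun z : {classic X} => cyl z (sf z)) C1.
  apply: (compact_cover_compact (subclosed_compact cl1 cpt (fun _ _ => I))).
  - by move=> z _; apply: cyl_open.
  - by move=> z C1z; exists z.
exists [seq (z : X, sf z) | z <- enum_fset D']; split.
  move=> z /cov [w wD' Hw]; exists (w : X, sf w) => //.
  by apply: List.in_map; apply/(In_mem (w : {classic X})).
move=> p /List.in_map_iff [w [<- wD']] z /= Hz.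
have C1w : C1 w by apply/set_mem/sD'; apply/(In_mem (w : {classic X})).
exact: (Hsf w C1w z Hz).
Qed.

End CubeTheory.

(** * Definable groups and their flows *)

Section DefinableGroup.
Variables (L : language) (M : structure L) (k : nat).
Variables (G : set ('I_k -> M)) (mul : ('I_k -> M) -> ('I_k -> M) -> ('I_k -> M))
  (one : 'I_k -> M) (inv : ('I_k -> M) -> ('I_k -> M)).
Hypothesis DG : definable_group G mul one inv.

Let defG : defset G. Proof. by case: DG. Qed.
Let group1 : G one. Proof. by have [_ _ [G1 _] _ _] := DG. Qed.
Let groupM g h : G g -> G h -> G (mul g h).
Proof. by have [_ _ [_ [H _]] _ _] := DG; apply: H. Qed.
Let groupV g : G g -> G (inv g). Proof. by have [_ _ [_ [_ H]] _ _] := DG; apply: H. Qed.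
Let mulgA g h l : G g -> G h -> G l -> mul (mul g h) l = mul g (mul h l).
Proof. by have [_ _ _ H _] := DG; apply: H. Qed.
Let mul1g g : G g -> mul one g = g. Proof. by have [_ _ _ _ H] := DG; case/H. Qed.
Let mulg1 g : G g -> mul g one = g. Proof. by have [_ _ _ _ H] := DG; case/H. Qed.
Let mulVg g : G g -> mul (inv g) g = one. Proof. by have [_ _ _ _ H] := DG; case/H. Qed.
Let mulgV g : G g -> mul g (inv g) = one. Proof. by have [_ _ _ _ H] := DG; case/H. Qed.

(* Swapping the first two blocks of the graph of [mul] and projecting out the third. *)
Lemma def_rel_translate (D : set ('I_k -> M)) : defset D ->
  def_rel (fun v => [/\ G (seg k k v), G (prefix k v) & D (mul (seg k k v) (prefix k v))]).
Proof.
move=> dD; have [_ dgraph _ _ _] := DG.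
pose sw j : nat + M := inl (if j < k then k + j else if j < k + k then j - k else j).
have dP := def_relI (def_rel_ren sw dgraph) (def_rel_ren (fun j => inl (k + k + j)) dD).
apply: def_rel_ext (def_rel_exists (k + k) k dP) => v /=.
have blocksE (u : 'I_k -> M) (w := place (k + k) u v) :
    [/\ blk k 0 (fun j => sum_eval w (sw j)) = seg k k v,
        blk k 1 (fun j => sum_eval w (sw j)) = prefix k v,
        blk k 2 (fun j => sum_eval w (sw j)) = u &
        prefix k (fun j => sum_eval w (inl (k + k + j))) = u].
  split; apply: funext => i; have ik := ltn_ord i;
    rewrite /Defs.blk /Defs.prefix /sw /w /=.
  - by rewrite mul0n add0n ik place_out //; lia.
  - by rewrite mul1n ifF ?ifT ?addKn ?place_out //; lia.
  - by rewrite ifF ?ifF mul2n -addnn ?place_in //; lia.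
  - exact: place_in.
split=> [[u [[]]]|[Gk Gp Dm]]; first by case: (blocksE u) => -> -> -> -> ? ? -> ?.
by exists (mul (seg k k v) (prefix k v)); case: (blocksE (mul (seg k k v) (prefix k v))) => -> -> -> ->.
Qed.

Lemma def_translate (D : set ('I_k -> M)) h : defset D -> G h ->
  defset [set g | G g /\ D (mul h g)].
Proof.
move=> /def_rel_translate /(def_rel_place k h) dT Gh; apply: def_rel_ext dT => v.
rewrite seg_place; suff -> : prefix k (place k h v) = prefix k v by split=> [[]|[]].
by apply: funext => i; rewrite /Defs.prefix place_out // ltn_ord.
Qed.


Lemma defset_bool_fiber (f : ('I_k -> M) -> bool) b :
  defset [set g | G g /\ f g] -> defset [set g | G g /\ f g = b].
Proof.
move=> df; case: b; first by apply: def_rel_ext df => v /=; split=> -[].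
apply: def_rel_ext (def_relI defG (def_relC df)) => v /=.
split=> -[Gv H]; split=> //; last by rewrite H => -[].
by case: (f (prefix k v)) H => // H; case: H.
Qed.

Lemma definable_map_cube (T := 'I_k -> M) (P : (T -> bool) -> Prop) (f : T -> cube P) :
  compact [set: cube P] ->
  (forall h, defset [set g | G g /\ coord (f g) h]) -> definable_map G f.
Proof.
move=> cpt dcoord C1 C2 cl1 cl2 dis.
have [l [coverC1 avoidC2]] := cube_separate cpt cl1 cl2 dis.
exists [set g | G g /\ exists2 p, List.In p l & cyl p.1 p.2 (f g)]; split.
- have datom (p : cube P * seq T) h : defset [set g | G g /\ coord (f g) h = coord p.1 h].
    exact: defset_bool_fiber.
  have := def_relI defG (def_rel_has l (fun p => def_rel_all p.2 (datom p))).
  apply: def_rel_ext => v /=; split=> -[Gv [p pl Hp]]; split=> //; exists p => // h hp.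
    by have [] := Hp h hp.
  by split=> //; apply: Hp.
- by move=> g [].
- by move=> g Gg /coverC1 [p pl Hp]; split=> //; exists p.
- by move=> g Gg [_ [p pl /(avoidC2 p pl)]].
Qed.

Section TranslatesOfY.
(* [m0] only witnesses that [M] is nonempty. *)
Variables (m0 : M) (Y : set ('I_k -> M)).
Hypotheses (dY : defset Y) (YG : Y `<=` G).

(* The closure in [2^G] of the right translates [h |-> Y (h g)] of the indicator of [Y]. *)
Definition closure_translates (z : ('I_k -> M) -> bool) : Prop :=
  (forall h, ~ G h -> z h = false) /\
  (forall s : seq ('I_k -> M), (forall h, List.In h s -> G h) ->
     exists2 g, G g & forall h, List.In h s -> (Y (mul h g) <-> z h)).

Lemma closure_translatesY : closure_translates (fun h => `[< Y h >]).
Proof.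
split=> [h nGh|s sG]; first by case: asboolP => // /YG.
by exists one => // h /sG Gh; rewrite mulg1 //; split=> [/asboolP|/asboolP].
Qed.

Lemma closure_translates_closed (z0 : ('I_k -> M) -> bool) :
  (forall s, exists w : cube closure_translates,
     forall h, List.In h s -> coord w h = z0 h) -> closure_translates z0.
Proof.
move=> Hz; split=> [h nGh|s sG].
  have [[w [wG _]] /= Hw] := Hz [:: h]; rewrite -Hw; [exact: wG|by left].
have [[w [_ Hws]] /= Hw] := Hz s; have [g Gg Hg] := Hws s sG.
by exists g => // h hs; rewrite -Hw //; apply: Hg.
Qed.

Hypothesis DT : forall p : set (formula M), in_SG G p -> definable_type k p.

(* The conditions [Y (h x) <-> z h], [h] in [G], are finitely consistent and
   extend to a complete type [p] over [M]; then [z u] holds iff [Y (u x)] is in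
   [p], so [z] is definable because [p] is. *)
Lemma def_closure_translates z : closure_translates z -> defset [set u | G u /\ z u].
Proof.
move=> [_ Hz].
pose S h : set (nat -> M) := [set v | G (prefix k v) /\ (Y (mul h (prefix k v)) <-> z h)].
have fI : finI (G : set {classic ('I_k -> M)}) S.
  move=> D' sD'; have [|g Gg Hg] := Hz (enum_fset D').
    by move=> h hD; apply/set_mem/sD'; apply/(In_mem (h : {classic ('I_k -> M)})).
  exists (place 0 g (fun=> m0)) => h /= hD'.
  rewrite /S /= prefix_seg seg_place; split=> //; apply: Hg.
  by apply/(In_mem (h : {classic ('I_k -> M)})).
have [U [UU SU]] := ultraFilterLemma (finI_filter fI).
have SinU h : G h -> U (S h).
  by move=> Gh; apply: SU; exists (S h) => //; apply: finI_from1.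
have UG : U [set v | G (prefix k v)] by apply: filterS (SinU one group1) => v [].
have dfiber := def_ultra_type_fiber (Q := fun x u => [/\ G u, G x & Y (mul u x)]) UU
  (DT (ultra_type_in_SG UU defG UG)) (def_rel_translate dY).
apply: def_rel_ext (def_relI defG dfiber) => v /=.
split=> -[Gu Hu]; split=> //.
  have [w [[_ _ Yw] [_ Hw]]] := filter_ex (filterI Hu (SinU _ Gu)).
  exact/Hw.
by apply: filterS (SinU _ Gu) => w [Gw Hw]; split=> //; apply/Hw.
Qed.

Lemma sym_of_closure_full z : closure_translates z -> (forall h, G h -> z h) ->
  [set mul y (inv w) | y in Y & w in Y] = G.
Proof.
move=> [_ Hz] zG; apply/seteqP; split=> [_ [y /YG Gy [w /YG Gw <-]]|g Gg].
  exact: groupM (groupV Gw).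
have [|g' Gg' Hg'] := Hz [:: g; one]; first by move=> h [<-|[<-|[]]].
exists (mul g g'); first by apply/(Hg' g); [left|apply: zG].
exists g'; first by rewrite -(mul1g Gg'); apply/(Hg' one); [right; left|apply: zG].
by rewrite mulgA ?mulgV ?mulg1 //; apply: groupV.
Qed.

Lemma not_generic_of_closure_empty z : closure_translates z ->
  (forall h, G h -> ~~ z h) -> ~ left_generic G mul Y.
Proof.
move=> [_ Hz] zG [n [gs [Ggs cover]]].
have [|g Gg Hg] := Hz [seq inv (gs i) | i <- enum 'I_n].
  by move=> h /List.in_map_iff [i [<- _]]; apply: groupV.
have [i [y [Yy eg]]] := cover g Gg; subst g.
have /Hg : List.In (inv (gs i)) [seq inv (gs i) | i <- enum 'I_n].
  by apply: List.in_map; apply/(In_mem i); rewrite mem_enum.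
have Ggi := Ggs i; have Giv := groupV Ggi; have Gy := YG Yy.
rewrite -mulgA ?mulVg ?mul1g // => - [/(_ Yy) + _].
by apply/negP/zG.
Qed.

Definition rtrans (g : 'I_k -> M) (z : ('I_k -> M) -> bool) h : bool :=
  if `[< G h >] then z (mul h g) else z h.

Lemma rtransE g z h : G h -> rtrans g z h = z (mul h g).
Proof. by move=> Gh; rewrite /rtrans asboolT. Qed.

Lemma rtrans_out g z h : ~ G h -> rtrans g z h = z h.
Proof. by move=> nGh; rewrite /rtrans asboolF. Qed.

Lemma closure_translates_rtrans g z : G g -> closure_translates z ->
  closure_translates (rtrans g z).
Proof.
move=> Gg [zout Hz]; split=> [h nGh|s sG]; first by rewrite rtrans_out ?zout.
have [|g' Gg' Hg'] := Hz (map (mul^~ g) s).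
  by move=> h /List.in_map_iff [h' [<- /sG Gh']]; apply: groupM.
exists (mul g g'); first exact: groupM.
move=> h hs; have Gh := sG h hs; rewrite rtransE // -mulgA //.
by apply: Hg'; apply: List.in_map.
Qed.

Definition translate (g : 'I_k -> M) (z : cube closure_translates) : cube closure_translates :=
  if pselect (G g) is left Gg
  then exist _ (rtrans g (coord z)) (closure_translates_rtrans Gg (proj2_sig z))
  else z.

Lemma coord_translate g z : G g -> coord (translate g z) = rtrans g (coord z).
Proof. by rewrite /translate; case: pselect. Qed.

Lemma translate_flow : definable_flow G mul one translate.
Proof.
have cpt : compact [set: cube closure_translates].
  exact/cube_compact/closure_translates_closed.
split=> //; first exact: cube_hausdorff.
- move=> g Gg; apply: (@cube_continuous _ _ _ (fun h => if `[< G h >] then mul h g else h)).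
  by move=> z h; rewrite coord_translate // /rtrans; case: ifP.
- split=> [z|g h z Gg Gh].
    apply: coord_inj; rewrite coord_translate //; apply: funext => h.
    by have [Gh|nGh] := pselect (G h); [rewrite rtransE ?mulg1|rewrite rtrans_out].
  have Ggh := groupM Gg Gh; apply: coord_inj; rewrite !coord_translate //.
  apply: funext => u; have [Gu|nGu] := pselect (G u); last by rewrite !rtrans_out.
  by rewrite !rtransE -?mulgA //; apply: groupM.
- move=> x; apply: definable_map_cube => // h.
  have [Gh|nGh] := pselect (G h); last first.
    apply: def_rel_ext def_rel0 => v; split=> // -[Gv].
    by rewrite coord_translate // rtrans_out // /coord (proj1 (proj2_sig x)).
  have := def_translate (def_closure_translates (proj2_sig x)) Gh.
  apply: def_rel_ext => v /=; split=> -[Gv H]; split=> //.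
    by rewrite coord_translate // rtransE //; case: H.
  by move: H; rewrite coord_translate // rtransE // => H; split=> //; apply: groupM.
Qed.

Lemma sym_generic_of_dea : definably_extremely_amenable G mul one ->
  left_generic G mul Y -> [set mul y (inv w) | y in Y & w in Y] = G.
Proof.
move=> dea gen; have [z fixz] := dea _ translate
  (ex_intro _ (exist _ _ closure_translatesY) I) translate_flow.
have zconst h : G h -> coord z h = coord z one.
  by move=> Gh; rewrite -{2}(fixz h Gh) coord_translate // rtransE ?mul1g.
case E: (coord z one).
  by apply: (sym_of_closure_full (proj2_sig z)) => h /zconst; rewrite E.
by case: (not_generic_of_closure_empty (proj2_sig z) _ gen) => h /zconst; rewrite E => /negbT.
Qed.

End TranslatesOfY.

Section Recurrence.
Variables (X : topologicalType) (act : ('I_k -> M) -> X -> X).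
Hypotheses (cpt : compact [set: X]) (act_cont : forall g, G g -> continuous (act g))
  (act1 : forall x, act one x = x)
  (actM : forall g h x, G g -> G h -> act (mul g h) x = act g (act h x)).

Let compl_invariant (O : set X) := forall g z, G g -> ~ O z -> ~ O (act g z).

Let proper_invariant_open (O : set X) :=
  [/\ open O, compl_invariant O & exists z, ~ O z].

Lemma exists_maximal_proper_invariant_open (x0 : X) : exists A,
  proper_invariant_open A /\ forall B, A `<` B -> ~ proper_invariant_open B.
Proof.
apply: Zorn_bigcup => F FP Ftot; split.
- by apply: bigcup_open => O /FP [].
- move=> g z Gg nz [O FO Ogz]; apply: nz; exists O => //.
  by apply: contrapT => nOz; have [_ /(_ g z Gg nOz) + _] := FP _ FO.
- have [[O0 FO0]|F0] := pselect (exists O, F O); last first.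
    by exists x0 => -[O FO _]; apply: F0; exists O.
  pose FF := filter_from F (fun O => ~` O).
  have FFF : Filter FF.
    apply: filter_from_filter; first by exists O0.
    move=> O1 O2 F1 F2; have [O12|O21] := Ftot _ _ F1 F2.
      by exists O2 => // z nz; split => // ?; apply/nz/O12.
    by exists O1 => // z nz; split => // ?; apply/nz/O21.
  have PFF : ProperFilter FF.
    by apply: filter_from_proper => O /FP [_ _ [z nz]]; exists z.
  have [z [_ clz]] := cpt PFF filterT.
  exists z => -[O FO Oz]; have /FP [oO _ _] := FO.
  have [y [ny Oy]] := clz (~` O) O (ex_intro2 _ _ O FO (fun _ h => h))
     (open_nbhs_nbhs (conj oO Oz)).
  exact: ny Oy.
Qed.

Lemma exists_minimal_subflow (x0 : X) : exists a0 : X, exists K : set X,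
  [/\ closed K, K a0, (forall g z, G g -> K z -> K (act g z)) &
      forall V z, open V -> V a0 -> K z -> exists2 h, G h & V (act h z)].
Proof.
have [A [[oA invA [a0 na0]] maxA]] := exists_maximal_proper_invariant_open x0.
exists a0, (~` A); split=> //; first by rewrite closedC.
move=> V z oV Va Kz; apply: contrapT => nret.
pose W := ~` A `&` \bigcap_(h in G) (act h @^-1` (~` V)).
have PW : proper_invariant_open (~` W).
  split.
  - rewrite openC; apply: closedI; first by rewrite closedC.
    apply: closed_bigI => h Gh.
    by move: (act_cont Gh) => /continuous_closedP; apply; rewrite closedC.
  - move=> g y Gg /contrapT [Ky Hy] []; split; first exact: invA.
    by move=> h Gh /=; rewrite -actM //; apply: Hy; exact: groupM.
  - by exists z => nW; apply: nW; split => // h Gh Vh; apply: nret; exists h.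
apply: (maxA _ _ PW); split; first by move=> y Ay [Ky _]; exact: Ky Ay.
move=> WA; apply: na0; apply: WA.
by move=> [_ /(_ one group1)]; rewrite /= act1.
Qed.

Definition syndetic_returns (a0 : X) (V : set X) :=
  exists2 s : seq ('I_k -> M), (forall h, List.In h s -> G h) &
    forall g, G g -> exists2 h, List.In h s & V (act h (act g a0)).

Lemma exists_almost_periodic (x0 : X) :
  exists a0 : X, forall V, open V -> V a0 -> syndetic_returns a0 V.
Proof.
have [a0 [K [clK Ka0 invK rec]]] := exists_minimal_subflow x0.
exists a0 => V oV Va0.
have [D' sD' cov] : finite_subset_cover (G : set {classic ('I_k -> M)})
    (fun h : {classic ('I_k -> M)} => act h @^-1` V) K.
  apply: (compact_cover_compact (subclosed_compact clK cpt (fun _ _ => I))).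
  - by move=> h Gh; move: (act_cont Gh) => /continuousP; apply.
  - by move=> z /(rec V z oV Va0) [h Gh Vh]; exists h.
exists (enum_fset D') => [h /(In_mem (h : {classic _})) /sD'|g Gg]; first exact: set_mem.
have [h hD' Vh] := cov _ (invK g a0 Gg Ka0).
by exists h => //; apply/(In_mem (h : {classic _})).
Qed.

Lemma left_generic_of_returns (a0 : X) (V : set X) (A0 : set ('I_k -> M)) :
  syndetic_returns a0 V -> (forall g, G g -> V (act g a0) -> A0 g) ->
  left_generic G mul A0.
Proof.
move=> [s sG ret] A0V; exists (length s), (fun i => inv (List.nth i s one)); split.
  by move=> i; apply/groupV/sG/List.nth_In/ltP.
move=> g Gg; have [h hs Vh] := ret g Gg; have Gh := sG h hs.
have [i [/ltP ilt ih]] := List.In_nth s h one hs.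
exists (Ordinal ilt), (mul h g); split; first by apply: A0V; [exact: groupM|rewrite actM].
by rewrite /= ih -mulgA ?mulVg ?mul1g //; apply: groupV.
Qed.

End Recurrence.

Lemma dea_of_sym_generic :
  (forall Y, defset Y -> Y `<=` G -> left_generic G mul Y ->
     [set mul y (inv z) | y in Y & z in Y] = G) ->
  definably_extremely_amenable G mul one.
Proof.
move=> symG X act [x0 _] [cpt hs cont [act1 actM] dmap].
have [a0 ap] := exists_almost_periodic cpt cont act1 actM x0.
exists a0 => g Gg; apply: contrapT => /eqP.
have := hs; rewrite open_hausdorff => /[apply] -[[O2 O1] /= [] O2g O1a [oO2 oO1 /eqP O12]].
move/set_mem: O2g => O2g; move/set_mem: O1a => O1a.
pose U := O1 `&` act g @^-1` O2.
have oU : open U by apply: openI => //; move: (cont g Gg) => /continuousP; apply.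
have [V [oV Va] clVU] := open_closure_subset hs cpt oU (conj O1a O2g).
have dis : closure V `&` ~` U = set0.
  by apply/seteqP; split => [y [h1 h2]|//]; exact: h2 (clVU _ h1).
have [A0 [dA0 A0G A0in A0out]] := dmap a0 (closure V) (~` U)
   (@closed_closure _ V) (open_closedC oU) dis.
have genA0 : left_generic G mul A0.
  apply: (left_generic_of_returns actM (ap V oV Va)) => h Gh Vh.
  exact/A0in/subset_closure.
have Gig := groupV Gg; have := Gig.
rewrite -(symG A0 dA0 A0G genA0) => -[a /[dup] /A0G Ga Aa [b /[dup] /A0G Gb Ab eab]].
have Ua : U (act a a0) by apply: contrapT; apply: A0out.
have [O1b _] : U (act b a0) by apply: contrapT; apply: A0out.
have ea : a = mul (inv g) b.
  by have Gib := groupV Gb; rewrite -eab mulgA ?mulVg ?mulg1.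
case: Ua => _; rewrite /= ea actM // -actM // mulgV // act1 => O2b.
by have : (O2 `&` O1) (act b a0) by []; rewrite O12.
Qed.

End DefinableGroup.

Lemma sym_generic_trivial (L : language) (M : structure L) (G : set ('I_0 -> M))
  (mul : ('I_0 -> M) -> ('I_0 -> M) -> ('I_0 -> M)) (one : 'I_0 -> M)
  (inv : ('I_0 -> M) -> ('I_0 -> M)) (Y : set ('I_0 -> M)) :
  definable_group G mul one inv -> left_generic G mul Y ->
  [set mul y (inv z) | y in Y & z in Y] = G.
Proof.
have I0 (f g : 'I_0 -> M) : f = g by apply: funext => -[].
move=> [_ _ [G1 _] _ _] [n [gs [_ cover]]]; have [i [y [Yy _]]] := cover one G1.
apply/seteqP; split=> [x _|g _]; first by rewrite (I0 x one).
by exists y => //; exists y => //; apply: I0.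
Qed.

Theorem proposition3p17 (L : language) (M : structure L) (k : nat)
  (G : set ('I_k -> M))
  (mul : ('I_k -> M) -> ('I_k -> M) -> ('I_k -> M))
  (one : 'I_k -> M) (inv : ('I_k -> M) -> ('I_k -> M)) :
  definable_group G mul one inv ->
  (forall p : set (formula M), in_SG G p -> definable_type k p) ->
  (definably_extremely_amenable G mul one <->
   forall Y : set ('I_k -> M), defset Y -> Y `<=` G -> left_generic G mul Y ->
     [set mul y (inv z) | y in Y & z in Y] = G).
Proof.
move=> DG DT; split; last exact: dea_of_sym_generic.
(* For [k = 0] there may be no element of [M] at hand, but then [G] is trivial. *)
move=> dea Y dY YG; case: k G mul one inv DG DT dea Y dY YG => [|k'] G mul one inv DG.
  by move=> *; exact: sym_generic_trivial DG _.
by move=> DT dea Y dY YG; exact: (sym_generic_of_dea DG (one ord0) dY YG DT dea).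
Qed.
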